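(* Let $d\ge 1$, $B>0$, $\alpha>0$, $D>0$, and let $\mathcal{X}\subseteq\mathbb{R}^d$ satisfy $\mathcal{X}\supseteq\{x\in\mathbb{R}^d:\|x\|_\infty\le D\}$. If there exists a pair $(f,O)\in\mathcal{O}_{\mathtt{sc}}$ on $\mathcal{X}$ (with parameters $B,\alpha$), then \[ \frac{B}{\alpha}\ \ge\ \frac{D\,d^{1/2}}{4}. \]
   Context: An oracle $O$ for a function $f:\mathcal{X}\to\mathbb{R}$ returns, on query $x\in\mathcal{X}$, a random vector $\hat g(x)\in\mathbb{R}^d$. The class $\mathcal{O}_{\mathtt{sc}}$ consists of all pairs $(f,O)$ such that: $f$ is convex on $\mathcal{X}$; $f$ is $\alpha$-strongly convex on $\mathcal{X}$, i.e. $x\mapsto f(x)-\frac{\alpha}{2}\|x\|_2^2$ is convex on $\mathcal{X}$; $\mathbb{E}[\hat g(x)\mid x]\in\partial f(x)$ for all $x\in\mathcal{X}$ (where $\partial f(x)$ is the subgradient set); and $\Pr(\|\hat g(x)\|_2^2\le B^2\mid x)=1$ for all $x\in\mathcal{X}$. *)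

From HB Require Import structures.
From mathcomp Require Import all_boot all_order all_algebra.
From mathcomp Require Import all_classical all_reals all_analysis.
Set Implicit Arguments. Unset Strict Implicit. Unset Printing Implicit Defensive.
Import Order.TTheory GRing.Theory Num.Theory.
Local Open Scope classical_set_scope.
Local Open Scope ring_scope.

Section Defs.
Context (R : realType) (d : nat).
Local Notation vec := 'rV[R]_d.

Definition dotv (u v : vec) : R := \sum_(i < d) u 0 i * v 0 i.
Definition sqnorm2 (u : vec) : R := dotv u u.
Definition normInf (u : vec) : R := \big[Num.max/0]_(i < d) `|u 0 i|.

Definition convex_on (X : set vec) (f : vec -> R) : Prop :=
  forall x y t, X x -> X y -> 0 <= t <= 1 ->
    X (t *: x + (1 - t) *: y) ->
    f (t *: x + (1 - t) *: y) <= t * f x + (1 - t) * f y.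

Definition strongly_convex_on (alpha : R) (X : set vec) (f : vec -> R) : Prop :=
  convex_on X (fun x => f x - alpha / 2 * sqnorm2 x).

Definition subdiff (X : set vec) (f : vec -> R) (x : vec) : set vec :=
  [set g | forall y, X y -> f x + dotv g (y - x) <= f y].

Definition expect_vec {dT} {T : measurableType dT} (P : probability T R)
    (G : T -> vec) : vec :=
  \row_i fine (\int[P]_w ((G w) 0 i)%:E).

(* Membership of (f, O) in O_sc with parameters B, alpha on X: the oracle
   answers query x with the random vector ghat x : T -> R^d on (T, P). *)
Definition in_Osc (X : set vec) (B alpha : R) {dT} {T : measurableType dT}
    (P : probability T R) (f : vec -> R) (ghat : vec -> T -> vec) : Prop :=
  [/\ convex_on X f,
      strongly_convex_on alpha X f,
      (forall x, X x -> forall i, measurable_fun setT (fun w => ghat x w 0 i)),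
      (forall x, X x -> subdiff X f x (expect_vec P (ghat x))) &
      (forall x, X x -> P [set w | sqnorm2 (ghat x w) <= B ^+ 2] = 1%E)].
End Defs.

(* Take c = (D, ..., D), so that c, -c and their midpoint 0 lie in the cube,
   and |c| = D sqrt d.  Strong convexity at the midpoint, combined with the
   subgradient inequalities at c and -c in the direction of 0, yields
   alpha |c|^2 <= <g(c) - g(-c), c>, where g(x) is the mean oracle answer at x.
   Since the oracle answers have norm at most B almost surely, so do their
   means, hence <g(c) - g(-c), c> <= 2 B |c|, i.e. B / alpha >= D sqrt d / 2. *)

From HB Require Import structures.
From mathcomp Require Import all_boot all_order all_algebra.
From mathcomp Require Import all_classical all_reals all_analysis.
From mathcomp Require Import ring lra measurable_realfun.
Import Order.TTheory GRing.Theory Num.Theory.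
Local Open Scope classical_set_scope.
Local Open Scope ring_scope.

Section Euclidean.
Context {R : realType} {d : nat}.
Implicit Types (u v : 'rV[R]_d) (a b : R).

Lemma dotvNr u v : dotv u (- v) = - dotv u v.
Proof. by rewrite /dotv -sumrN; apply: eq_bigr => i _; rewrite mxE mulrN. Qed.

Lemma sqnorm2N u : sqnorm2 (- u) = sqnorm2 u.
Proof. by rewrite /sqnorm2 /dotv; apply: eq_bigr => i _; rewrite mxE mulrNN. Qed.

Lemma sqnorm2_0 : sqnorm2 (0 : 'rV[R]_d) = 0.
Proof. by rewrite /sqnorm2 /dotv big1 // => i _; rewrite mxE mul0r. Qed.

Lemma sqnorm2_const_mx a : sqnorm2 (const_mx a : 'rV[R]_d) = d%:R * a ^+ 2.
Proof.
rewrite /sqnorm2 /dotv (eq_bigr (fun=> a ^+ 2)) => [|i _]; last by rewrite mxE.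
by rewrite sumr_const card_ord mulr_natl.
Qed.

Lemma sqr_coord_le_sqnorm2 u i : u 0 i ^+ 2 <= sqnorm2 u.
Proof.
rewrite /sqnorm2 /dotv (bigD1 i) //= -expr2 lerDl.
by apply: sumr_ge0 => j _; rewrite -expr2 sqr_ge0.
Qed.

Lemma normr_coord_le u a i : sqnorm2 u <= a ^+ 2 -> `|u 0 i| <= `|a|.
Proof.
move=> ua; rewrite -ler_sqr ?nnegrE // !real_normK ?num_real //.
exact: le_trans (sqr_coord_le_sqnorm2 u i) ua.
Qed.

Lemma dotv_le_mul u v a b : 0 < a -> 0 < b ->
  sqnorm2 u <= a ^+ 2 -> sqnorm2 v <= b ^+ 2 -> dotv u v <= a * b.
Proof.
move=> a0 b0 ua vb.
have : 0 <= b ^+ 2 * sqnorm2 u - 2 * a * b * dotv u v + a ^+ 2 * sqnorm2 v.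
  have -> : b ^+ 2 * sqnorm2 u - 2 * a * b * dotv u v + a ^+ 2 * sqnorm2 v =
      \sum_(i < d) (b * u 0 i - a * v 0 i) ^+ 2.
    rewrite /sqnorm2 /dotv !mulr_sumr -sumrB -big_split /=.
    by apply: eq_bigr => i _; ring.
  by apply: sumr_ge0 => i _; exact: sqr_ge0.
have ab0 : 0 < a * b by rewrite mulr_gt0.
nra.
Qed.

Lemma normInf_le u a : 0 <= a -> (forall i, `|u 0 i| <= a) -> normInf u <= a.
Proof.
move=> a0 ua; apply: (big_ind (fun x => x <= a)) => // x y xa ya.
by rewrite ge_max xa ya.
Qed.

Lemma strongly_convex_subdiff_opp {X : set 'rV[R]_d} {alpha f u gp gn} :
  strongly_convex_on alpha X f -> X u -> X (- u) -> X 0 ->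
  subdiff X f u gp -> subdiff X f (- u) gn ->
  alpha * sqnorm2 u <= dotv gp u - dotv gn u.
Proof.
move=> sc Xu Xnu X0 gpu gnu.
have t01 : 0 <= (2^-1 : R) <= 1 by apply/andP; split; lra.
have mid : 2^-1 *: u + (1 - 2^-1) *: - u = 0 :> 'rV[R]_d.
  by rewrite (_ : 1 - 2^-1 = 2^-1 :> R) ?scalerN ?subrr //; lra.
have := sc u (- u) 2^-1 Xu Xnu t01; rewrite mid sqnorm2N sqnorm2_0 => /(_ X0).
have := gpu 0 X0; rewrite sub0r dotvNr.
have := gnu 0 X0; rewrite sub0r opprK.
lra.
Qed.

End Euclidean.

Section Rintegral_sum.
Context {dT : measure_display} {T : measurableType dT} {R : realType}.
Context (mu : {measure set T -> \bar R}) (D : set T).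

Lemma Rintegral_sum (I : Type) (s : seq I) (F : I -> T -> R) : measurable D ->
  (forall i, mu.-integrable D (EFin \o F i)) ->
  \int[mu]_(x in D) (\sum_(i <- s) F i x) = \sum_(i <- s) \int[mu]_(x in D) F i x.
Proof.
move=> mD intF; elim: s => [|i s IH].
  by under eq_Rintegral do rewrite big_nil; rewrite big_nil Rintegral_cst // mul0r.
under eq_Rintegral do rewrite big_cons.
rewrite RintegralD ?IH ?big_cons //.
apply: (eq_integrable _ (fun x => \sum_(j <- s) (F j x)%:E)%E) => //.
  by move=> x _; rewrite sumEFin.
by apply: (integrable_sum mD) => j _; exact: intF.
Qed.

End Rintegral_sum.

Section expect_vec.
Context {R : realType} {dT : measure_display} {T : measurableType dT}.
Context (P : probability T R) {d : nat}.
Implicit Types (h k : T -> 'rV[R]_d) (v : 'rV[R]_d) (B c : R).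

Definition measurable_coords h := forall i, measurable_fun setT (fun w => h w 0 i).

Lemma measurable_sqnorm2 h : measurable_coords h ->
  measurable_fun setT (fun w => sqnorm2 (h w)).
Proof. by move=> mh; apply: measurable_sum => i; exact: measurable_funM. Qed.

Lemma expect_vec_ae_eq {h k} : measurable_coords h -> measurable_coords k ->
  {ae P, forall w, h w = k w} -> expect_vec P h = expect_vec P k.
Proof.
move=> mh mk hk; apply/rowP => i; rewrite !mxE; congr fine.
apply: ae_eq_integral => //; [exact/measurable_EFinP..|].
by apply: filterS hk => w -> _.
Qed.

Lemma dotv_expect_vec_le_bounded {h B v c} : measurable_coords h ->
  (forall w, sqnorm2 (h w) <= B ^+ 2) ->
  (forall u, sqnorm2 u <= B ^+ 2 -> dotv u v <= c) ->
  dotv (expect_vec P h) v <= c.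
Proof.
move=> mh hB Bc.
have intc (r : R) : P.-integrable setT (EFin \o cst r).
  exact: finite_measure_integrable_cst.
have int_coord i : P.-integrable setT (EFin \o (fun w => h w 0 i * v 0 i)).
  apply: (le_integrable _ _ _ (intc (`|B| * `|v 0 i|))) => //.
    by apply/measurable_EFinP; exact: measurable_funM.
  move=> w _; rewrite /= lee_fin normrM [leRHS]ger0_norm ?mulr_ge0 //.
  by rewrite ler_wpM2r ?normr_coord_le.
have -> : dotv (expect_vec P h) v = \int[P]_w dotv (h w) v.
  rewrite Rintegral_sum //; apply: eq_bigr => i _.
  rewrite mxE -RintegralZr //.
  apply: (le_integrable _ _ _ (intc `|B|)) => //; first exact/measurable_EFinP.
  by move=> w _; rewrite /= lee_fin [leRHS]ger0_norm ?normr_coord_le.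
apply: le_trans (_ : \int[P]_(w in setT) c <= c).
  apply: le_Rintegral => //; [|exact: intc|by move=> w _; exact: Bc].
  apply: (eq_integrable _ (fun w => \sum_(i < d) (h w 0 i * v 0 i)%:E)%E) => //.
    by move=> w _; rewrite sumEFin.
  by apply: (integrable_sum measurableT) => i _; exact: int_coord.
by rewrite Rintegral_cst // [fine _](congr1 fine (probability_setT P)) mulr1.
Qed.

Lemma dotv_expect_vec_le {h B v c} : measurable_coords h ->
  P [set w | sqnorm2 (h w) <= B ^+ 2] = 1%E ->
  (forall u, sqnorm2 u <= B ^+ 2 -> dotv u v <= c) ->
  dotv (expect_vec P h) v <= c.
Proof.
move=> mh PE Bc; set E := [set w | sqnorm2 (h w) <= B ^+ 2].
have mE : measurable E.
  by rewrite -[E]setTI; apply: measurable_fun_le => //; exact: measurable_sqnorm2.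
(* Changing [h] off the full-measure set [E] changes neither its expectation nor
   its measurability, and makes it bounded everywhere. *)
pose k w := \1_E w *: h w.
have mk : measurable_coords k.
  move=> i; under eq_fun do rewrite mxE.
  by apply: measurable_funM => //; exact: measurable_indic.
have PnotE : P (~` E) = 0%E by rewrite probability_setC // PE subee.
rewrite (expect_vec_ae_eq mh mk); last first.
  exists (~` E); split => //; first exact: measurableC.
  by apply: subsetC => w Ew /=; rewrite /k /= indicE mem_set // scale1r.
apply: (dotv_expect_vec_le_bounded (B := B)) => // w; rewrite /k /= indicE.
have [/set_mem Ew | _] := boolP (w \in E); first by rewrite scale1r.
by rewrite scale0r sqnorm2_0 sqr_ge0.
Qed.

End expect_vec.

Theorem lemma1 (R : realType) (d : nat) (hd : (1 <= d)%N) (B alpha D : R)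
  (hB : 0 < B) (halpha : 0 < alpha) (hD : 0 < D)
  (X : set 'rV[R]_d) (hX : [set x | normInf x <= D] `<=` X)
  (dT : measure_display) (T : measurableType dT) (P : probability T R)
  (f : 'rV[R]_d -> R) (ghat : 'rV[R]_d -> T -> 'rV[R]_d)
  (hO : in_Osc X B alpha P f ghat) :
  D * Num.sqrt (d%:R) / 4 <= B / alpha.
Proof.
case: hO => _ sc mghat subgrad bounded.
set r := D * Num.sqrt d%:R.
have r0 : 0 < r by rewrite mulr_gt0 // sqrtr_gt0 ltr0n.
pose c : 'rV[R]_d := const_mx D.
have sqnorm2_c : sqnorm2 c = r ^+ 2.
  by rewrite sqnorm2_const_mx exprMn sqr_sqrtr ?ler0n // mulrC.
have inX (u : 'rV[R]_d) : (forall i, `|u 0 i| <= D) -> X u.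
  by move=> uD; apply/hX/normInf_le => //; exact: ltW.
have Xc : X c by apply: inX => i; rewrite mxE ger0_norm // ltW.
have Xnc : X (- c) by apply: inX => i; rewrite !mxE normrN ger0_norm // ltW.
have X0 : X 0 by apply: inX => i; rewrite mxE normr0 ltW.
have grad_le x v : X x -> sqnorm2 v <= r ^+ 2 ->
    dotv (expect_vec P (ghat x)) v <= B * r.
  move=> Xx vr; apply: (dotv_expect_vec_le P (mghat x Xx) (bounded x Xx)) => u uB.
  exact: dotv_le_mul.
have gp_le : dotv (expect_vec P (ghat c)) c <= B * r.
  by apply: grad_le; rewrite ?sqnorm2_c.
have gn_le : - dotv (expect_vec P (ghat (- c))) c <= B * r.
  by rewrite -dotvNr; apply: grad_le; rewrite ?sqnorm2N ?sqnorm2_c.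
have := strongly_convex_subdiff_opp sc Xc Xnc X0 (subgrad c Xc) (subgrad _ Xnc).
rewrite sqnorm2_c => gap.
rewrite ler_pdivlMr //; nra.
Qed.
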